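(* Let $m\ge1$, $n\ge2$, let $\lvert\phi\rangle\in(\mathbb{C}^d)^{\otimes m}$ be a unit vector, and let $\lvert\psi\rangle\in(\mathbb{C}^d)^{\otimes n}$ be a unit vector with Schmidt decomposition $\lvert\psi\rangle=\sum_{i=1}^d\alpha_i\lvert w_i\rangle\lvert v_i\rangle$ (with $\alpha_i\ge0$, $\{\lvert w_i\rangle\}\subseteq\mathbb{C}^d$ and $\{\lvert v_i\rangle\}\subseteq(\mathbb{C}^d)^{\otimes n-1}$ orthonormal). Set $\rho:=\sum_{i=1}^d\alpha_i^2\lvert w_i\rangle\langle w_i\rvert\otimes\lvert v_i\rangle\langle v_i\rvert$ and $\lvert\psi'\rangle:=\lvert\phi\rangle\otimes\lvert\psi\rangle\in(\mathbb{C}^d)^{\otimes m+n}$, with the qudits of $\lvert\phi\rangle$ numbered $1,\ldots,m$ and those of $\lvert\psi\rangle$ numbered $m+1,\ldots,m+n$. Let $\Pi$ be a projector acting on a subset $\mathcal{S}\subseteq\{1,\ldots,m+n\}$ of the qudits (tensored with the identity elsewhere). If $\Pi$ crosses the Schmidt cut at qudit $m+1$, i.e. $m+1\in\mathcal{S}$ and $\mathcal{S}\cap\{m+2,\ldots,m+n\}\neq\emptyset$, then $\mathrm{Tr}(\Pi\,\lvert\phi\rangle\langle\phi\rvert\otimes\rho)\ge\frac1d\mathrm{Tr}(\Pi\lvert\psi'\rangle\langle\psi'\rvert)$. Otherwise $\mathrm{Tr}(\Pi\,\lvert\phi\rangle\langle\phi\rvert\otimes\rho)=\mathrm{Tr}(\Pi\lvert\psi'\rangle\langle\psi'\rvert)$.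 *)

(* complex scalars are algC (algebraic complex numbers, with
   conjugation x^* and the partial order of a numClosedFieldType). *)
From HB Require Import structures.
From mathcomp Require Import all_boot all_order all_algebra algC.
Set Implicit Arguments. Unset Strict Implicit. Unset Printing Implicit Defensive.
Import Order.TTheory GRing.Theory Num.Theory.
Local Open Scope ring_scope.

(* Computational basis of (C^d)^{(x) k}: tuples of k digits in {0..d-1}. *)
Definition Idx (d k : nat) := {ffun 'I_k -> 'I_d}.

Definition Vec (d k : nat) := Idx d k -> algC.
Definition Op (d k : nat) := Idx d k -> Idx d k -> algC.

Definition dotp {T : finType} (u v : T -> algC) : algC := \sum_x (u x)^* * v x.
Definition unit_vec {T : finType} (u : T -> algC) : Prop := dotp u u = 1.
Definition orthonormal {I T : finType} (u : I -> T -> algC) : Prop :=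
  forall i j, dotp (u i) (u j) = (i == j)%:R.

Definition proj_on {T : finType} (u : T -> algC) : T -> T -> algC :=
  fun x y => u x * (u y)^*.

Definition trace_mul {T : finType} (A B : T -> T -> algC) : algC :=
  \sum_x \sum_y A x y * B y x.

Definition is_projector {T : finType} (P : T -> T -> algC) : Prop :=
  (forall x y, P y x = (P x y)^*) /\
  (forall x y, \sum_z P x z * P z y = P x y).

(* P acts on the qudits in S, tensored with the identity on the others:
   P x y = Q(x|_S, y|_S) * [x and y agree outside S]. *)
Definition acts_on (d N : nat) (S : {set 'I_N}) (P : Op d N) : Prop :=
  exists Q : Op d N,
    (forall x x' y y' : Idx d N, (forall i, i \in S -> x i = x' i) ->
                       (forall i, i \in S -> y i = y' i) -> Q x y = Q x' y') /\
    (forall x y, P x y = if [forall i, (i \notin S) ==> (x i == y i)]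
                         then Q x y else 0).

(* tensor products along 'I_(m+n) = first m qudits ++ last n qudits *)
Definition left_idx d m n (x : Idx d (m + n)) : Idx d m := [ffun i => x (lshift n i)].
Definition right_idx d m n (x : Idx d (m + n)) : Idx d n := [ffun j => x (rshift m j)].

Definition tens_vec d m n (u : Vec d m) (v : Vec d n) : Vec d (m + n) :=
  fun x => u (left_idx x) * v (right_idx x).
Definition tens_op d m n (A : Op d m) (B : Op d n) : Op d (m + n) :=
  fun x y => A (left_idx x) (left_idx y) * B (right_idx x) (right_idx y).

Definition ord_first n (hn : (0 < n)%N) : 'I_n := Ordinal hn.
Definition tail_idx d n (i0 : 'I_n) (x : Idx d n) : Idx d n.-1 :=
  [ffun j => x (lift i0 j)].

Definition schmidt_decomp d n (i0 : 'I_n) (psi : Vec d n)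
  (alpha : 'I_d -> algC) (w : 'I_d -> 'I_d -> algC) (v : 'I_d -> Vec d n.-1) :=
  [/\ forall i, 0 <= alpha i,
      orthonormal w, orthonormal v &
      forall x, psi x = \sum_i alpha i * w i (x i0) * v i (tail_idx i0 x)].

Definition rho_of d n (i0 : 'I_n)
  (alpha : 'I_d -> algC) (w : 'I_d -> 'I_d -> algC) (v : 'I_d -> Vec d n.-1) : Op d n :=
  fun x y => \sum_i alpha i ^+ 2 * proj_on (w i) (x i0) (y i0)
                                 * proj_on (v i) (tail_idx i0 x) (tail_idx i0 y).

From Pilot Require Import Defs.
From HB Require Import structures.
From mathcomp Require Import all_boot all_order all_algebra algC.
From mathcomp Require Import ring.
Import Order.TTheory GRing.Theory Num.Theory.
Local Open Scope ring_scope.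
Set Implicit Arguments. Unset Strict Implicit.

(* Write psi' = sum_i f_i with f_i := phi (x) alpha_i w_i (x) v_i, so that
   |phi><phi| (x) rho = sum_i |f_i><f_i|.  For every projector P,
     sum_i <f_i|P|f_i> - 1/d <psi'|P|psi'> = 1/(2d) sum_(i,j) <f_i - f_j|P|f_i - f_j> >= 0,
   which is the inequality (it holds whether or not P crosses the cut).  If P does
   not cross the cut, it acts as the identity either on qudit m+1 or on qudits
   m+2..m+n; orthogonality of the w_i, resp. of the v_i, then kills every cross
   term <f_j|P|f_i> with i <> j, and only the diagonal sum_i <f_i|P|f_i> remains. *)

Definition outer {T : finType} (u v : T -> algC) : T -> T -> algC :=
  fun x y => u x * (v y)^*.

Section Trace.
Variables (T : finType) (P : T -> T -> algC).

Lemma eq_trace_mul (A B : T -> T -> algC) :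
  (forall x y, A x y = B x y) -> trace_mul P A = trace_mul P B.
Proof. by move=> eqAB; apply: eq_bigr => x _; apply: eq_bigr => y _; rewrite eqAB. Qed.

Lemma trace_mulBr (A B : T -> T -> algC) :
  trace_mul P A - trace_mul P B = trace_mul P (fun x y => A x y - B x y).
Proof.
rewrite -sumrB; apply: eq_bigr => x _; rewrite -sumrB.
by apply: eq_bigr => y _; rewrite mulrBr.
Qed.

Lemma trace_mulZr c (A : T -> T -> algC) :
  c * trace_mul P A = trace_mul P (fun x y => c * A x y).
Proof.
rewrite mulr_sumr; apply: eq_bigr => x _; rewrite mulr_sumr.
by apply: eq_bigr => y _; rewrite mulrCA.
Qed.

Lemma trace_mul_sumr (I : finType) (F : I -> T -> T -> algC) :
  \sum_i trace_mul P (F i) = trace_mul P (fun x y => \sum_i F i x y).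
Proof.
rewrite /trace_mul exchange_big; apply: eq_bigr => x _; rewrite exchange_big.
by apply: eq_bigr => y _; rewrite mulr_sumr.
Qed.

Lemma trace_proj_on_sum (I : finType) (f : I -> T -> algC) :
  trace_mul P (proj_on (fun x => \sum_i f i x)) =
  \sum_i \sum_j trace_mul P (outer (f i) (f j)).
Proof.
under eq_bigr do rewrite trace_mul_sumr.
rewrite trace_mul_sumr; apply: eq_trace_mul => x y.
by rewrite /proj_on rmorph_sum mulr_suml; apply: eq_bigr => i _; rewrite mulr_sumr.
Qed.

(* [P = P^* P], so the trace is the squared norm of [P u]. *)
Lemma trace_proj_on_ge0 (u : T -> algC) :
  is_projector P -> 0 <= trace_mul P (proj_on u).
Proof.
move=> [P_adj P_idem].
have -> : trace_mul P (proj_on u) =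
          \sum_z (\sum_y P z y * u y) * (\sum_x P z x * u x)^*.
  transitivity (\sum_x \sum_y \sum_z (P z x)^* * P z y * (u y * (u x)^*)).
    apply: eq_bigr => x _; apply: eq_bigr => y _.
    by rewrite -P_idem mulr_suml; apply: eq_bigr => z _; rewrite P_adj.
  under eq_bigr do rewrite exchange_big /=.
  rewrite exchange_big /=; apply: eq_bigr => z _.
  rewrite exchange_big /= mulr_suml; apply: eq_bigr => y _.
  rewrite rmorph_sum mulr_sumr; apply: eq_bigr => x _.
  by rewrite rmorphM /=; ring.
by apply: sumr_ge0 => z _; apply: mul_conjC_ge0.
Qed.

Lemma trace_proj_on_sum_orth (I : finType) (f : I -> T -> algC) :
  (forall i j, i != j -> trace_mul P (outer (f i) (f j)) = 0) ->
  trace_mul P (proj_on (fun x => \sum_i f i x)) = \sum_i trace_mul P (proj_on (f i)).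
Proof.
move=> offdiag0; rewrite trace_proj_on_sum; apply: eq_bigr => i _.
by rewrite (bigD1 i) //= big1 ?addr0 // => j ji; apply: offdiag0; rewrite eq_sym.
Qed.

End Trace.

Lemma sum_mulC_sub_mean d (a b : 'I_d -> algC) : (0 < d)%N ->
  \sum_i a i * (b i)^* - d%:R^-1 * ((\sum_i a i) * (\sum_i b i)^*) =
  (2 * d)%:R^-1 * \sum_i \sum_j (a i - a j) * (b i - b j)^*.
Proof.
move=> d_gt0.
have sum_const (F : 'I_d -> algC) : \sum_(i < d) \sum_(j < d) F i = d%:R * \sum_i F i.
  by rewrite mulr_sumr; apply: eq_bigr => i _; rewrite sumr_const card_ord mulr_natl.
have -> : \sum_i \sum_j (a i - a j) * (b i - b j)^* =
    2 * (d%:R * \sum_i a i * (b i)^* - (\sum_i a i) * (\sum_i b i)^*).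
  have expand i j : (a i - a j) * (b i - b j)^* =
      (a i * (b i)^* + a j * (b j)^*) - (a i * (b j)^* + a j * (b i)^*).
    by rewrite rmorphB /=; ring.
  under eq_bigr do under eq_bigr do rewrite expand.
  rewrite rmorph_sum mulr_suml.
  under [X in _ - X]eq_bigr do rewrite mulr_sumr.
  under eq_bigr do rewrite sumrB !big_split /=.
  rewrite sumrB !big_split /= sum_const [X in _ + X - _]exchange_big /= sum_const.
  by rewrite [\sum_i \sum_j a j * _]exchange_big /=; ring.
have d_neq0 : d%:R != 0 :> algC by rewrite pnatr_eq0 -lt0n.
by rewrite natrM; field.
Qed.

Lemma trace_proj_on_sum_le (T : finType) (P : T -> T -> algC) d (f : 'I_d -> T -> algC) :
  is_projector P ->
  d%:R^-1 * trace_mul P (proj_on (fun x => \sum_i f i x)) <=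
  \sum_i trace_mul P (proj_on (f i)).
Proof.
move=> projP; case: d f => [|d] f; first by rewrite invr0 mul0r big_ord0.
rewrite -subr_ge0.
have -> : \sum_i trace_mul P (proj_on (f i)) -
          d.+1%:R^-1 * trace_mul P (proj_on (fun x => \sum_i f i x)) =
          (2 * d.+1)%:R^-1 *
          \sum_i \sum_j trace_mul P (proj_on (fun x => f i x - f j x)).
  under [in RHS]eq_bigr do rewrite trace_mul_sumr.
  rewrite !trace_mul_sumr !trace_mulZr trace_mulBr; apply: eq_trace_mul => x y.
  exact: sum_mulC_sub_mean.
rewrite mulr_ge0 ?invr_ge0 ?ler0n //.
by apply: sumr_ge0 => i _; apply: sumr_ge0 => j _; apply: trace_proj_on_ge0.
Qed.

Section TensorFactor.
Variables (d N : nat) (K Z : finType) (join : K -> Z -> Idx d N).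

Definition is_tensor_id (P : Op d N) :=
  exists Q : K -> K -> algC,
    forall k k' z z', P (join k z) (join k' z') = (z == z')%:R * Q k k'.

(* [join] splits an index into K * Z, the Z-part being carried by the positions
   in [D] and read back by [zof]. *)
Section ActsOn.
Variables (D : pred 'I_N) (zof : Idx d N -> Z).
Hypothesis join_offD : forall k z z' i, ~~ D i -> join k z i = join k z' i.
Hypothesis join_onD : forall k k' z i, D i -> join k z i = join k' z i.
Hypothesis zof_join : forall k z, zof (join k z) = z.
Hypothesis zof_onD : forall x y : Idx d N, (forall i, D i -> x i = y i) -> zof x = zof y.

Lemma acts_on_tensor_id S (P : Op d N) :
  acts_on S P -> (forall i, D i -> i \notin S) -> is_tensor_id P.
Proof.
move=> [Q [Q_onS PE]] DS.
have [z0 _ | Z0] := pickP (@predT Z); last first.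
  by exists (fun _ _ => 0) => k k' z; have := Z0 z.
exists (fun k k' => P (join k z0) (join k' z0)) => k k' z z'; rewrite !PE.
have -> : Q (join k z) (join k' z') = Q (join k z0) (join k' z0).
  by apply: Q_onS => i iS; apply: join_offD; apply: contraL iS; apply: DS.
have [<-|nzz'] := eqVneq z z'; last first.
  rewrite mul0r; case: forallP => // agree; case/eqP: nzz'.
  rewrite -(zof_join k z) -(zof_join k' z'); apply: zof_onD => i Di.
  by apply/eqP; move/implyP: (agree i); apply; apply: DS.
rewrite mul1r; congr (if _ then _ else _); apply: eq_forallb => i.
case Di: (D i); first by rewrite (join_onD k k' z Di) (join_onD k k' z0 Di) !eqxx.
by rewrite (join_offD k z z0) ?Di // (join_offD k' z z0) ?Di.
Qed.

End ActsOn.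

Hypothesis join_bij : bijective (fun kz : K * Z => join kz.1 kz.2).

Lemma sum_join (F : Idx d N -> algC) : \sum_x F x = \sum_k \sum_z F (join k z).
Proof.
rewrite pair_big (reindex (fun kz : K * Z => join kz.1 kz.2)) //.
exact: onW_bij.
Qed.

Lemma trace_outer_tensor_orth (P : Op d N) (f g : K -> algC) (h h' : Z -> algC)
    (u u' : Vec d N) :
  is_tensor_id P ->
  (forall k z, u (join k z) = f k * h z) -> (forall k z, u' (join k z) = g k * h' z) ->
  dotp h' h = 0 -> trace_mul P (outer u u') = 0.
Proof.
move=> [Q PE] uE u'E hh'0.
rewrite /trace_mul sum_join; apply: big1 => k _.
transitivity (\sum_z \sum_k' Q k k' * f k' * (g k)^* * ((h' z)^* * h z)).
  apply: eq_bigr => z _; rewrite sum_join; apply: eq_bigr => k' _.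
  rewrite (bigD1 z) //= big1 ?addr0 => [|z' z'z]; last first.
    by rewrite PE eq_sym (negbTE z'z) !mul0r.
  by rewrite PE eqxx mul1r /outer uE u'E rmorphM /=; ring.
by rewrite exchange_big; apply: big1 => k' _; rewrite -mulr_sumr -/(dotp h' h) hh'0 mulr0.
Qed.

End TensorFactor.

Section Glue.
Variables (d m n : nat) (p : 'I_n).

Definition glue (a : Idx d m) (c : 'I_d) (t : Idx d n.-1) : Idx d (m + n) :=
  [ffun i => match split i with
             | inl l => a l
             | inr r => if unlift p r is Some j then t j else c end].

Lemma cut_ordP (i : 'I_(m + n)) :
  [\/ exists l, i = lshift n l, i = rshift m p | exists j, i = rshift m (lift p j)].
Proof.
rewrite -[i]splitK; case: (split i) => [l|r] /=; first by apply: Or31; exists l.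
by case: (unliftP p r) => [j ->|->]; [apply: Or33; exists j | apply: Or32].
Qed.

Lemma glue_lshift a c t l : glue a c t (lshift n l) = a l.
Proof. by rewrite ffunE -[lshift n l]/(unsplit (inl l)) unsplitK. Qed.

Lemma glue_cut a c t : glue a c t (rshift m p) = c.
Proof. by rewrite ffunE -[rshift m p]/(unsplit (inr p)) unsplitK unlift_none. Qed.

Lemma glue_tail a c t j : glue a c t (rshift m (lift p j)) = t j.
Proof. by rewrite ffunE -[rshift m _]/(unsplit (inr _)) unsplitK liftK. Qed.

Lemma left_idx_glue a c t : left_idx (glue a c t) = a.
Proof. by apply/ffunP => l; rewrite ffunE glue_lshift. Qed.

Lemma right_idx_glue_cut a c t : right_idx (glue a c t) p = c.
Proof. by rewrite ffunE glue_cut. Qed.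

Lemma tail_right_idx_glue a c t : tail_idx p (right_idx (glue a c t)) = t.
Proof. by apply/ffunP => j; rewrite ffunE [right_idx _ _]ffunE glue_tail. Qed.

Lemma glueK (x : Idx d (m + n)) :
  glue (left_idx x) (right_idx x p) (tail_idx p (right_idx x)) = x.
Proof.
apply/ffunP => i; case: (cut_ordP i) => [[l ->]| -> | [j ->]].
- by rewrite glue_lshift ffunE.
- by rewrite glue_cut ffunE.
- by rewrite glue_tail !ffunE.
Qed.

Definition join_cut (k : Idx d m * Idx d n.-1) (c : 'I_d) := glue k.1 c k.2.
Definition join_tail (k : Idx d m * 'I_d) (t : Idx d n.-1) := glue k.1 k.2 t.

Lemma join_cut_bij : bijective (fun kc : (Idx d m * Idx d n.-1) * 'I_d => join_cut kc.1 kc.2).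
Proof.
exists (fun x => ((left_idx x, tail_idx p (right_idx x)), right_idx x p)) => [[[a t] c]|x].
  by rewrite /join_cut /= left_idx_glue right_idx_glue_cut tail_right_idx_glue.
exact: glueK.
Qed.

Lemma join_tail_bij : bijective (fun kt : (Idx d m * 'I_d) * Idx d n.-1 => join_tail kt.1 kt.2).
Proof.
exists (fun x => ((left_idx x, right_idx x p), tail_idx p (right_idx x))) => [[[a c] t]|x].
  by rewrite /join_tail /= left_idx_glue right_idx_glue_cut tail_right_idx_glue.
exact: glueK.
Qed.

Lemma acts_on_tensor_id_cut S (P : Op d (m + n)) :
  acts_on S P -> rshift m p \notin S -> is_tensor_id join_cut P.
Proof.
move=> actP pS.
apply: (acts_on_tensor_id (D := pred1 (rshift m p)) (zof := fun x => x (rshift m p))) actP _.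
- move=> [a t] c c' i /=.
  by case: (cut_ordP i) => [[l ->]| -> | [j ->]]; rewrite ?glue_lshift ?glue_tail ?eqxx.
- by move=> [a t] [a' t'] c i /eqP ->; rewrite !glue_cut.
- by move=> [a t] c; rewrite /join_cut glue_cut.
- by move=> x y /(_ _ (eqxx _)).
- by move=> i /eqP ->.
Qed.

Lemma acts_on_tensor_id_tail S (P : Op d (m + n)) :
  acts_on S P -> (forall j, rshift m (lift p j) \notin S) -> is_tensor_id join_tail P.
Proof.
move=> actP tailS.
apply: (acts_on_tensor_id (D := [pred i | [exists j, i == rshift m (lift p j)]])
          (zof := fun x => tail_idx p (right_idx x))) actP _.
- move=> [a c] t t' i /=.
  case: (cut_ordP i) => [[l ->]| -> | [j ->]]; rewrite ?glue_lshift ?glue_cut //.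
  by move/existsPn/(_ j); rewrite eqxx.
- by move=> [a c] [a' c'] t i /existsP [j /eqP ->]; rewrite !glue_tail.
- by move=> [a c] t; rewrite /join_tail tail_right_idx_glue.
- move=> x y agree; apply/ffunP => j; rewrite !ffunE; apply: agree.
  by apply/existsP; exists j.
- by move=> i /existsP [j /eqP ->].
Qed.

End Glue.

Section SchmidtTerms.
Variables (d m n : nat) (p : 'I_n) (phi : Vec d m).
Variables (alpha : 'I_d -> algC) (w : 'I_d -> 'I_d -> algC) (v : 'I_d -> Vec d n.-1).

Definition schmidt_term i : Vec d (m + n) :=
  tens_vec phi (fun r => alpha i * (w i (r p) * v i (tail_idx p r))).

Lemma schmidt_term_glue i a c t :
  schmidt_term i (glue p a c t) = phi a * (alpha i * (w i c * v i t)).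
Proof.
by rewrite /schmidt_term /tens_vec left_idx_glue right_idx_glue_cut tail_right_idx_glue.
Qed.

Lemma tens_op_rho_of (alpha_ge0 : forall i, 0 <= alpha i) x y :
  tens_op (proj_on phi) (rho_of p alpha w v) x y = \sum_i proj_on (schmidt_term i) x y.
Proof.
rewrite /tens_op /rho_of mulr_sumr; apply: eq_bigr => i _.
by rewrite /proj_on /schmidt_term /tens_vec !rmorphM /= (geC0_conj (alpha_ge0 i)); ring.
Qed.

(* [Defs.orthonormal] is qualified: all_algebra also exports an [orthonormal]. *)
Lemma trace_schmidt_term_cut S (P : Op d (m + n)) i j :
  Defs.orthonormal w -> acts_on S P -> rshift m p \notin S -> i != j ->
  trace_mul P (outer (schmidt_term i) (schmidt_term j)) = 0.
Proof.
move=> w_orth actP pS ij.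
apply: (trace_outer_tensor_orth (@join_cut_bij d m n p) (acts_on_tensor_id_cut actP pS)
          (h := w i) (h' := w j)
          (f := fun k => phi k.1 * alpha i * v i k.2) (g := fun k => phi k.1 * alpha j * v j k.2)).
- by move=> [a t] c; rewrite /join_cut schmidt_term_glue /=; ring.
- by move=> [a t] c; rewrite /join_cut schmidt_term_glue /=; ring.
- by rewrite w_orth eq_sym (negbTE ij).
Qed.

Lemma trace_schmidt_term_tail S (P : Op d (m + n)) i j :
  Defs.orthonormal v -> acts_on S P -> (forall k, rshift m (lift p k) \notin S) -> i != j ->
  trace_mul P (outer (schmidt_term i) (schmidt_term j)) = 0.
Proof.
move=> v_orth actP tailS ij.
apply: (trace_outer_tensor_orth (@join_tail_bij d m n p) (acts_on_tensor_id_tail actP tailS)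
          (h := v i) (h' := v j)
          (f := fun k => phi k.1 * alpha i * w i k.2) (g := fun k => phi k.1 * alpha j * w j k.2)).
- by move=> [a c] t; rewrite /join_tail schmidt_term_glue /=; ring.
- by move=> [a c] t; rewrite /join_tail schmidt_term_glue /=; ring.
- by rewrite v_orth eq_sym (negbTE ij).
Qed.

End SchmidtTerms.

Theorem corollary2 (d m n : nat) (hm : (1 <= m)%N) (hn : (2 <= n)%N)
  (phi : Vec d m) (psi : Vec d n)
  (alpha : 'I_d -> algC) (w : 'I_d -> 'I_d -> algC) (v : 'I_d -> Vec d n.-1)
  (S : {set 'I_(m + n)}) (Pi : Op d (m + n)) :
  unit_vec phi -> unit_vec psi ->
  schmidt_decomp (ord_first (ltnW hn)) psi alpha w v ->
  is_projector Pi -> acts_on S Pi ->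
  let rho := rho_of (ord_first (ltnW hn)) alpha w v in
  let psi' := tens_vec phi psi in
  let crosses := (rshift m (ord_first (ltnW hn)) \in S) &&
                 [exists j, rshift m (lift (ord_first (ltnW hn)) j) \in S] in
  (crosses ->
     trace_mul Pi (tens_op (proj_on phi) rho)
       >= d%:R^-1 * trace_mul Pi (proj_on psi')) /\
  (~~ crosses ->
     trace_mul Pi (tens_op (proj_on phi) rho) = trace_mul Pi (proj_on psi')).
Proof.
move=> _ _ [alpha_ge0 w_orth v_orth psiE] projPi actPi rho psi' crosses.
set p := ord_first (ltnW hn); set f := schmidt_term p phi alpha w v.
have -> : trace_mul Pi (tens_op (proj_on phi) rho) = \sum_i trace_mul Pi (proj_on (f i)).
  by rewrite trace_mul_sumr; apply: eq_trace_mul; apply: tens_op_rho_of.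
have psi'E x : psi' x = \sum_i f i x.
  by rewrite /psi' /tens_vec psiE mulr_sumr; apply: eq_bigr => i _; rewrite -mulrA.
have -> : trace_mul Pi (proj_on psi') = trace_mul Pi (proj_on (fun x => \sum_i f i x)).
  by apply: eq_trace_mul => x y; rewrite /proj_on !psi'E.
split=> [_|]; first exact: trace_proj_on_sum_le.
rewrite negb_and => /orP[cut_out | /existsPn tail_out]; symmetry;
  apply: trace_proj_on_sum_orth => i j.
- exact: trace_schmidt_term_cut w_orth actPi cut_out.
- exact: trace_schmidt_term_tail v_orth actPi tail_out.
Qed.
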